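(* Let $\mathbf{u}=(u_n)$ be an a-sequence such that $s_\mathbf{u}(\mathbb{T})$ is open in $(\mathbb{T},\tau_\mathbf{u})$. Then the sequence of ratios $(q_n)$ of $\mathbf{u}$ is bounded.
   Context: An a-sequence is a strictly increasing sequence of integers $\mathbf{u}=(u_n)_{n\in\mathbb{N}}$ with $u_n\mid u_{n+1}$ for all $n$; its ratios are $q_0=u_0$ and $q_n=u_n/u_{n-1}$ for $n>0$. $\mathbb{T}=\mathbb{R}/\mathbb{Z}$, $\|x\|$ is the distance from $x$ to the nearest integer, $d(x,y)=\|x-y\|$. $s_\mathbf{u}(\mathbb{T})=\{x\in\mathbb{T}: u_nx\to0\text{ in }\mathbb{T}\}$. $\tau_\mathbf{u}$ is the topology on $\mathbb{T}$ induced by the metric $\varrho_\mathbf{u}(x,y)=\sup_n\max\{d(x,y),d(u_nx,u_ny)\}$. *)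

(* the circle T = R/Z is represented by R (all notions
   below are Z-periodic). *)
From HB Require Import structures.
From mathcomp Require Import all_boot all_order all_algebra.
From mathcomp Require Import all_classical all_reals all_analysis.
Set Implicit Arguments. Unset Strict Implicit. Unset Printing Implicit Defensive.
Import Order.TTheory GRing.Theory Num.Theory.
Import numFieldNormedType.Exports.
Local Open Scope classical_set_scope.
Local Open Scope ring_scope.

Definition a_sequence (u : nat -> int) : Prop :=
  (forall n, u n < u n.+1) /\ (forall n, (u n %| u n.+1)%Z).

Definition aseq_ratio (u : nat -> int) (n : nat) : int :=
  if n is m.+1 then (u m.+1 %/ u m)%Z else u 0%N.

Definition normT {R : realType} (x : R) : R :=
  Num.min (x - (Num.floor x)%:~R) ((Num.floor x)%:~R + 1 - x).

Definition dT {R : realType} (x y : R) : R := normT (x - y).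

Definition s_u {R : realType} (u : nat -> int) : set R :=
  [set x | normT ((u n)%:~R * x) @[n --> \oo] --> (0 : R)].

Definition rho_u {R : realType} (u : nat -> int) (x y : R) : R :=
  sup [set r | exists n : nat,
         r = Num.max (dT x y) (dT ((u n)%:~R * x) ((u n)%:~R * y))].

Definition open_tau {R : realType} (u : nat -> int) (A : set R) : Prop :=
  forall x, A x -> exists2 e : R, 0 < e & forall y, rho_u u x y < e -> A y.

(* Suppose the ratios are unbounded and that some rho_u-ball of radius e around
   0 lies in s_u.  Fix D with 2/D < e and indices p_0 < p_1 < ... with
   q_{p_k} >= D, and put y = sum_k t_k / u_{p_k} with t_k = floor(q_{p_k}/D).
   The denominators grow at least geometrically, so for every integer c with
   |c| <= u_{p_K - 1} the number c y lies within 2/D of c times the K-th partial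
   sum, an integer when all u_{p_k} (k < K) divide c; this gives
   rho_u(0, y) <= 2/D < e, hence y in s_u.  But for c = u_{p_K - 1} the K-th term
   alone contributes at least 1/(2D), so ||u_{p_K - 1} y|| >= 1/(2D) for every
   K, and y is not in s_u. *)
From HB Require Import structures.
From mathcomp Require Import all_boot all_order all_algebra.
From mathcomp Require Import all_classical all_reals all_analysis.
From mathcomp Require Import ring lra zify.
Import Order.TTheory GRing.Theory Num.Theory.
Import numFieldNormedType.Exports.
Set Implicit Arguments.
Unset Strict Implicit.
Local Open Scope ring_scope.

Section DistanceToIntegers.
Variable R : realType.

Lemma normT_le_dist (x : R) (m : int) : normT x <= `|x - m%:~R|.
Proof.
rewrite /normT; have /andP[h1 h2] := floor_itv x.
have [hm|hm] := lerP m (Num.floor x).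
- rewrite ger0_norm; last by rewrite subr_ge0 (le_trans _ h1) // ler_int.
  by rewrite ge_min lerB ?ler_int.
- rewrite ler0_norm; last by rewrite subr_le0 (le_trans (ltW h2)) // ler_int lezD1.
  have : ((Num.floor x + 1)%:~R : R) <= m%:~R by rewrite ler_int lezD1.
  by rewrite intrD ge_min opprB => hm1; apply/orP; right; rewrite lerB.
Qed.

Lemma normTN_le_dist (x : R) (m : int) : normT (- x) <= `|x - m%:~R|.
Proof. by rewrite (le_trans (normT_le_dist _ (- m))) // mulrNz -opprD normrN. Qed.

Lemma normTDz (x : R) (m : int) : normT (x + m%:~R) = normT x.
Proof.
have floorDz : Num.floor (x + m%:~R) = Num.floor x + m.
  apply: floor_def; have /andP[h1 h2] := floor_itv x.
  by rewrite !intrD lerD2r -addrA (addrC m%:~R) addrA ltrD2r h1 -intrD h2.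
by rewrite /normT floorDz intrD; congr (Num.min _ _); ring.
Qed.

Lemma normT_small (x : R) : 0 <= x < 1 -> normT x = Num.min x (1 - x).
Proof.
move=> hx; rewrite /normT (_ : Num.floor x = 0) ?subr0 ?add0r //.
by apply: floor_def; rewrite add0r.
Qed.

Lemma normT0 : normT (0 : R) = 0.
Proof. by rewrite normT_small ?lexx ?ltr01 // subr0; apply/min_idPl; rewrite ler01. Qed.

End DistanceToIntegers.

Section ASequence.
Variable u : nat -> int.
Hypothesis hu : a_sequence u.

Lemma aseq_gt0 n : (0 < n)%N -> 0 < u n.
Proof.
case: n => // m _; case: hu => hlt hdv.
have [k hk] := dvdzP (hdv m.+1); have [j hj] := dvdzP (hdv m).
have h1 := hlt m; have h2 := hlt m.+1.
rewrite ltNge; apply/negP => hle.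
have [h0|hn] := eqVneq (u m.+1) 0; first by move: h2; rewrite hk h0 mulr0 ltxx.
have hneg : u m.+1 < 0 by rewrite lt_neqAle hn hle.
have [hj1|hj1] := lerP j 0.
  have : 0 <= j * u m by rewrite mulr_le0 // ltW // (lt_trans h1 hneg).
  by rewrite -hj leNgt hneg.
have : j * u m <= u m by have := lt_trans h1 hneg; nia.
by rewrite -hj leNgt h1.
Qed.

Lemma aseq_le : {homo u : m n / (m <= n)%N >-> m <= n}.
Proof. by apply: homo_leq => [//|???|n]; [exact: le_trans | exact: ltW (hu.1 n)]. Qed.

Lemma aseq_dvd : {homo u : m n / (m <= n)%N >-> (m %| n)%Z}.
Proof. by apply: homo_leq => [?|???|]; [exact: dvdzz | exact: dvdz_trans | exact: hu.2]. Qed.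

Lemma aseq_norm_le m n : (m <= n)%N -> (0 < n)%N -> `|u m| <= u n.
Proof.
move=> hmn hn; case: m hmn => [|m] hmn; last by rewrite gtr0_norm ?aseq_gt0 ?aseq_le.
apply: (le_trans _ (aseq_le hn)); have [k hk] := dvdzP (hu.2 0%N).
have h1 := @aseq_gt0 1%N isT; rewrite hk in h1 *.
have [h0|h0] := lerP 0 (u 0%N).
  by rewrite ger0_norm //; have [hk0|hk0] := lerP k 0; nia.
by rewrite ltr0_norm //; have [hk0|hk0] := lerP k (-1); nia.
Qed.

Lemma aseq_ratioE n : (0 < n)%N -> u n = aseq_ratio u n * u n.-1.
Proof. by case: n => // m _ /=; rewrite divzK // hu.2. Qed.

Lemma aseq_ratio_ge0 n : (1 < n)%N -> 0 <= aseq_ratio u n.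
Proof. by case: n => // [] [] // m _ /=; rewrite divz_ge0 ?aseq_gt0 // ltW ?aseq_gt0. Qed.

Lemma aseq_ratio_bounded_upto N :
  exists M : int, forall i, (i <= N)%N -> `|aseq_ratio u i| <= M.
Proof.
elim: N => [|N [M hM]]; first by exists `|aseq_ratio u 0|; case.
exists (M + `|aseq_ratio u N.+1|) => i; rewrite leq_eqVlt => /orP[/eqP ->|hi].
  by rewrite lerDr (le_trans _ (hM 0%N _)).
by rewrite (le_trans (hM i hi)) // lerDl.
Qed.

Lemma aseq_ratio_unbounded_subseq (D : int) :
  ~ (exists M : int, forall n : nat, `|aseq_ratio u n| <= M) ->
  exists p : nat -> nat,
    [/\ (1 < p 0)%N, forall k, (p k < p k.+1)%N & forall k, D <= aseq_ratio u (p k)].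
Proof.
move=> unbounded.
have large N : exists n, (N.+1 < n)%N /\ D <= aseq_ratio u n.
  have [M hM] := aseq_ratio_bounded_upto N.+1.
  apply: contrapT => none; apply: unbounded; exists (Num.max M D) => n.
  case: (leqP n N.+1) => hn; first by rewrite le_max hM.
  rewrite le_max ger0_norm ?aseq_ratio_ge0 ?(leq_trans _ hn) //.
  apply/orP; right; rewrite leNgt; apply/negP => hnD.
  by apply: none; exists n; rewrite (ltW hnD).
have [next nextP] := choice large.
exists (fun k => iter k.+1 next 0%N); split => [|k|k]; first exact: (nextP 0%N).1.
- by rewrite iterS (ltn_trans _ (nextP _).1).
- exact: (nextP _).2.
Qed.

End ASequence.

Section LiouvilleType.
Variable R : realType.
Variable u : nat -> int.
Hypothesis hu : a_sequence u.
Variable D : nat.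
Hypothesis D_ge2 : (2 <= D)%N.
Variable p : nat -> nat.
Hypothesis p0_gt1 : (1 < p 0)%N.
Hypothesis p_incr : forall k, (p k < p k.+1)%N.
Hypothesis ratio_p_ge : forall k, D%:Z <= aseq_ratio u (p k).

Definition digit k : int := (aseq_ratio u (p k) %/ D%:Z)%Z.
Definition uprev k : R := (u (p k).-1)%:~R.
Definition term k : R := (digit k)%:~R / (u (p k))%:~R.
Definition psum L : R := \sum_(0 <= k < L) term k.
Definition ylim : R := sup (range psum).

Lemma p_lt : {homo p : j k / (j < k)%N}.
Proof. exact: homo_ltn ltn_trans p_incr. Qed.

Lemma p_gt k : (k.+1 < p k)%N.
Proof. by elim: k => // k ih; exact: leq_ltn_trans ih (p_incr k). Qed.

Lemma uprev_ge1 k : 1 <= uprev k.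
Proof.
rewrite /uprev ler1z; suff : 0 < u (p k).-1 by lia.
by apply: aseq_gt0 => //; have := p_gt k; lia.
Qed.

Lemma uprev_gt0 k : 0 < uprev k.
Proof. exact: lt_le_trans ltr01 (uprev_ge1 k). Qed.

Lemma u_pE k : (u (p k))%:~R = (aseq_ratio u (p k))%:~R * uprev k :> R.
Proof. by rewrite /uprev -intrM -aseq_ratioE //; have := p_gt k; lia. Qed.

Lemma D_gt0 : (0 < D)%N.
Proof. exact: leq_trans D_ge2. Qed.

Lemma D_gt0R : (0 : R) < D%:R.
Proof. by rewrite ltr0n D_gt0. Qed.

Lemma ratio_ge_D k : (D%:R : R) <= (aseq_ratio u (p k))%:~R.
Proof. by have := ratio_p_ge k; rewrite -(ler_int R). Qed.

Lemma ratio_gt0 k : (0 : R) < (aseq_ratio u (p k))%:~R.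
Proof. exact: lt_le_trans D_gt0R (ratio_ge_D k). Qed.

Lemma digit_ge1 k : 1 <= digit k.
Proof.
have := ratio_p_ge k; have := @ltz_ceil (aseq_ratio u (p k)) D%:Z.
rewrite /digit ltz_nat D_gt0; nia.
Qed.

Lemma digit_le k : digit k * D%:Z <= aseq_ratio u (p k).
Proof. by apply: lez_floor; have := D_gt0; lia. Qed.

Lemma digit_lt k : aseq_ratio u (p k) < (digit k + 1) * D%:Z.
Proof. by apply: ltz_ceil; have := D_gt0; lia. Qed.

Lemma term_ge0 k : 0 <= term k.
Proof.
have := digit_ge1 k; have := ratio_gt0 k; have := uprev_gt0 k.
rewrite /term u_pE -(ler_int R) => hv hQ hd.
by rewrite divr_ge0 ?mulr_ge0 ?ltW // (lt_le_trans ltr01).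
Qed.

Lemma term_le k : term k <= D%:R^-1 / uprev k.
Proof.
have hQ := ratio_gt0 k; have hv := uprev_gt0 k; have hD := D_gt0R.
have hdigit : (digit k)%:~R <= (aseq_ratio u (p k))%:~R / (D%:R : R).
  by rewrite ler_pdivlMr //; have := digit_le k; rewrite -(ler_int R) intrM.
rewrite /term u_pE (le_trans (ler_wpM2r _ hdigit)) ?invr_ge0 ?mulr_ge0 ?(ltW hQ) ?(ltW hv) //.
by rewrite le_eqVlt; apply/orP; left; apply/eqP; field; rewrite !gt_eqF.
Qed.

Lemma uprev_double k : 2 * uprev k <= uprev k.+1.
Proof.
have hv := uprev_gt0 k.
have h1 : (u (p k))%:~R <= uprev k.+1.
  by rewrite /uprev ler_int aseq_le //; have := p_incr k; lia.
apply: le_trans h1; rewrite u_pE ler_pM2r // (le_trans _ (ratio_ge_D k)) // ler_nat.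
exact: D_ge2.
Qed.

Lemma sum_term_le K m : \sum_(K <= k < K + m) term k <= 2 * D%:R^-1 / uprev K.
Proof.
have hD : 0 < D%:R^-1 :> R by rewrite invr_gt0 D_gt0R.
elim: m K => [|m ih] K.
  by rewrite addn0 big_geq // divr_ge0 ?mulr_ge0 ?ltW ?uprev_gt0.
rewrite -addSnnS big_ltn ?ltn_addr // (le_trans (lerD (term_le K) (ih K.+1))) //.
have hv := uprev_gt0 K; have hv1 := uprev_gt0 K.+1; have h2 := uprev_double K.
have : 2 * D%:R^-1 / uprev K.+1 <= D%:R^-1 / uprev K.
  by rewrite ler_pdivrMr // mulrAC ler_pdivlMr //; nra.
lra.
Qed.

Lemma psum_le K L : psum L <= psum K + 2 * D%:R^-1 / uprev K.
Proof.
have sum_ge0 m n : 0 <= \sum_(m <= k < n) term k by apply: sumr_ge0 => k _; exact: term_ge0.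
have psum_split m n : (m <= n)%N -> psum n = psum m + \sum_(m <= k < n) term k.
  by move=> hmn; rewrite /psum (@big_cat_nat _ _ _ m 0 n _ _ (leq0n m) hmn).
have hrem : 0 <= 2 * D%:R^-1 / uprev K.
  by rewrite divr_ge0 ?mulr_ge0 ?invr_ge0 ?ltW ?D_gt0R ?uprev_gt0.
case: (leqP L K) => hLK.
  by rewrite (psum_split L K hLK); have := sum_ge0 L K; lra.
by rewrite (psum_split K L (ltnW hLK)) lerD2l -(subnKC (ltnW hLK)) sum_term_le.
Qed.

Lemma psum_le_ylim L : psum L <= ylim.
Proof.
apply: ub_le_sup; last by exists L.
by exists (psum 0 + 2 * D%:R^-1 / uprev 0) => r [M _ <-]; exact: psum_le.
Qed.

Lemma ylim_le K : ylim <= psum K + 2 * D%:R^-1 / uprev K.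
Proof. by apply: ge_sup => [|r [L _ <-]]; [exists (psum 0), 0%N | exact: psum_le]. Qed.

Lemma psum_int (c : int) K : (forall k, (k < K)%N -> (u (p k) %| c)%Z) ->
  c%:~R * psum K = (\sum_(0 <= k < K) ((c %/ u (p k))%Z * digit k))%:~R.
Proof.
move=> hdvd; rewrite /psum mulr_sumr rmorph_sum; apply: eq_big_nat => k /andP[_ hk].
rewrite /term /= intrM -{1}(divzK (hdvd k hk)) intrM.
have : (u (p k))%:~R != 0 :> R by rewrite u_pE mulf_neq0 // gt_eqF ?ratio_gt0 ?uprev_gt0.
by move=> hu0; field.
Qed.

Lemma dist_ylim_psum_le (c : int) K : (`|c|%:~R : R) <= uprev K ->
  `|c%:~R * ylim - c%:~R * psum K| <= 2 * D%:R^-1.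
Proof.
move=> hc; have hv := uprev_gt0 K.
have hgap0 : 0 <= ylim - psum K by rewrite subr_ge0 psum_le_ylim.
have hgap : ylim - psum K <= 2 * D%:R^-1 / uprev K by rewrite lerBlDl ylim_le.
rewrite -mulrBr normrM (ger0_norm hgap0) -intr_norm.
apply: (le_trans (ler_wpM2r hgap0 hc)); apply: (le_trans (ler_wpM2l (ltW hv) hgap)).
by rewrite mulrC divfK // gt_eqF.
Qed.

Lemma ylim_gap k : D%:R^-1 / 2 <= uprev k * ylim - uprev k * psum k.
Proof.
have hnext : psum k + term k <= ylim by have := psum_le_ylim k.+1; rewrite /psum big_nat_recr.
have hv := uprev_gt0 k; have hQ := ratio_gt0 k; have hD := D_gt0R.
apply: (le_trans (y := uprev k * term k)); last first.
  by rewrite -mulrBr ler_wpM2l ?(ltW hv) //; lra.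
have -> : uprev k * term k = (digit k)%:~R / (aseq_ratio u (p k))%:~R.
  by rewrite /term u_pE; field; rewrite !gt_eqF.
have : (aseq_ratio u (p k))%:~R <= (2 * digit k * D%:Z)%:~R :> R.
  by rewrite ler_int; have := digit_lt k; have := digit_ge1 k; nia.
rewrite !intrM -!pmulrn ler_pdivlMr // => hQd.
have -> : D%:R^-1 / 2 * (aseq_ratio u (p k))%:~R = (aseq_ratio u (p k))%:~R / (2 * D%:R) :> R.
  by field; rewrite gt_eqF.
by rewrite ler_pdivrMr ?mulr_gt0 //; lra.
Qed.

Lemma rho_u0_ylim_le : rho_u u 0 ylim <= 2 * D%:R^-1.
Proof.
apply: ge_sup => [|_ [n ->]]; first by eexists; exists 0%N.
rewrite ge_max /dT mulr0 !sub0r; apply/andP; split.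
  apply: (le_trans (normTN_le_dist _ 0)).
  have := @dist_ylim_psum_le 1 0; rewrite /psum big_geq // !mul1r; apply.
  by rewrite normr1 uprev_ge1.
(* With K the first index such that n < p_K, u_n is a multiple of every u_{p_k}
   (k < K) and |u_n| <= u_{p_K - 1}. *)
have [K nK Kmin] := ex_minnP (ex_intro (fun K => (n < p K)%N) n (ltnW (p_gt n))).
have hdvd k : (k < K)%N -> (u (p k) %| u n)%Z.
  by move=> hkK; apply: (aseq_dvd hu); rewrite leqNgt; apply/negP => /Kmin; rewrite leqNgt hkK.
apply: (le_trans (normTN_le_dist _ (\sum_(0 <= k < K) ((u n %/ u (p k))%Z * digit k)))).
rewrite -(psum_int hdvd) dist_ylim_psum_le //.
by rewrite /uprev ler_int aseq_norm_le //; have := p_gt K; lia.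
Qed.

Hypothesis D_ge4 : (4 <= D)%N.

Lemma normT_ylim_ge N : D%:R^-1 / 2 <= normT ((u (p N).-1)%:~R * ylim).
Proof.
set c := u (p N).-1.
have hdvd k : (k < N)%N -> (u (p k) %| c)%Z.
  by move=> hkN; apply: (aseq_dvd hu); have := p_lt hkN; lia.
have hc : (`|c|%:~R : R) <= uprev N.
  by rewrite /uprev ler_int aseq_norm_le //; have := p_gt N; lia.
have hlo := ylim_gap N; have hup := dist_ylim_psum_le hc.
rewrite -/(uprev N) in hlo; rewrite /c -/(uprev N) in hup *.
rewrite -(subrK (uprev N * psum N) (uprev N * ylim)).
set s := uprev N * ylim - uprev N * psum N in hlo hup *.
rewrite [uprev N * psum N](psum_int hdvd) normTDz.
have hs : s <= 2 * D%:R^-1 := le_trans (ler_norm s) hup.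
have hD : D%:R^-1 * 4 <= 1 :> R.
  by rewrite -ler_pdivlMl ?invr_gt0 ?D_gt0R // invrK mulr1 (ler_nat R 4 D).
have hD0 : 0 < D%:R^-1 :> R by rewrite invr_gt0 D_gt0R.
by rewrite normT_small ?le_min; [apply/andP; split|apply/andP; split]; lra.
Qed.

Lemma ylim_notin_s_u : ~ s_u u ylim.
Proof.
move=> /(cvgr_lt 0) /(_ (D%:R^-1 / 2)) [|N _ hN].
  by rewrite divr_gt0 ?invr_gt0 ?D_gt0R.
have : (N <= (p N).-1)%N by have := p_gt N; lia.
by move/hN; rewrite /= ltNge normT_ylim_ge.
Qed.

End LiouvilleType.

Lemma s_u0 (R : realType) (u : nat -> int) : @s_u R u 0.
Proof.
rewrite /s_u /= (_ : (fun n => _) = fun=> 0); first exact: cvg_cst.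
by apply: funext => n; rewrite mulr0 normT0.
Qed.

Lemma unbounded_ratio_notin_s_u_near0 (R : realType) (u : nat -> int) (D : nat) :
  a_sequence u -> ~ (exists M : int, forall n : nat, `|aseq_ratio u n| <= M) ->
  (4 <= D)%N -> exists y : R, rho_u u 0 y <= 2 * D%:R^-1 /\ ~ s_u u y.
Proof.
move=> hu unbounded D_ge4; have D_ge2 : (2 <= D)%N by apply: leq_trans D_ge4.
have [p [p0_gt1 p_incr ratio_p_ge]] := aseq_ratio_unbounded_subseq hu D%:Z unbounded.
exists (ylim R u D p); split; first exact: rho_u0_ylim_le.
exact: ylim_notin_s_u.
Qed.

Lemma exists_nat_ge4_inv_lt (R : realType) (e : R) : 0 < e ->
  exists2 D : nat, (4 <= D)%N & 2 * D%:R^-1 < e.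
Proof.
move=> he; exists (Num.truncn (2 / e)).+4 => //.
have hD : (0 : R) < (Num.truncn (2 / e)).+4%:R by rewrite ltr0n.
rewrite ltr_pdivrMr // [e * _]mulrC -ltr_pdivrMr //.
by apply: lt_le_trans (truncnS_gt _) _; rewrite ler_nat ltnS -addn3 leq_addr.
Qed.

Theorem mainTheorem9 (R : realType) (u : nat -> int) :
  a_sequence u -> open_tau u (@s_u R u) ->
  exists M : int, forall n : nat, `|aseq_ratio u n| <= M.
Proof.
move=> hu hopen; apply: contrapT => unbounded.
have [e he ball_in_s_u] := hopen 0 (s_u0 u).
have [D D_ge4 De] := exists_nat_ge4_inv_lt he.
have [y [rho_y y_notin]] := unbounded_ratio_notin_s_u_near0 R hu unbounded D_ge4.
exact/y_notin/ball_in_s_u/(le_lt_trans rho_y De).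
Qed.
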